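(* Let $G$ be a group, $U$ a nonlocal vertex algebra on which $G$ acts by automorphisms, and $V=\coprod_{g\in G}V[g]$ a nonlocal vertex $G$-graded algebra. Assume that both $U$ and $V$ are irreducible nonlocal vertex algebras and that $U$ has countable dimension over $\mathbb{C}$. Then $U\sharp_GV$ is an irreducible nonlocal vertex algebra.
   Context: A nonlocal vertex algebra is a complex vector space $V$ with vector $\mathbf{1}$ and linear $Y:V\to\mathrm{Hom}(V,V((x)))$, $Y(v,x)=\sum_nv_nx^{-n-1}$, with $Y(\mathbf{1},x)v=v$, $Y(v,x)\mathbf{1}\in V[[x]]$ with constant term $v$, and weak associativity $(x_0+x_2)^lY(u,x_0+x_2)Y(v,x_2)w=(x_0+x_2)^lY(Y(u,x_0)v,x_2)w$ for some $l\ge0$. It is irreducible if $V$, as a module over itself via $Y$, has no submodules other than $0$ and $V$. A nonlocal vertex $G$-graded algebra ($e$ the identity of $G$) is a nonlocal vertex algebra $V=\coprod_gV[g]$ with $\mathbf{1}\in V[e]$ and $Y(u,x)v\in V[gh]((x))$ for $u\in V[g]$, $v\in V[h]$. The smash product $U\sharp_GV$ is $U\otimes V$ with vacuum $\mathbf{1}\otimes\mathbf{1}$ and $Y_\sharp(u\otimes v,x)(u'\otimes v')=Y(u,x)g(u')\otimes Y(v,x)v'$ for $u,u'\in U$, $v\in V[g]$, $v'\in V$; it is a nonlocal vertex algebra. *)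

From HB Require Import structures.
From mathcomp Require Import all_boot all_order all_algebra.
From mathcomp Require Import monoid.
From mathcomp Require Import reals complex.
Set Implicit Arguments.
Unset Strict Implicit.
Unset Printing Implicit Defensive.
Import Order.TTheory GRing.Theory Num.Theory.
Local Open Scope ring_scope.

(* Formal vertex operators are encoded by their modes:                      *)
(*   Y u v n  stands for  u_n v,  where  Y(u,x)v = \sum_n u_n v x^{-n-1}.    *)

Section NLVA.
Variable C : fieldType.

Definition gbinom (r : int) (k : nat) : C :=
  (\prod_(i < k) ((r - (i : nat)%:Z)%:~R : C)) / (k`!)%:R.

Variable V : lmodType C.

Definition bilinear_modes (Y : V -> V -> int -> V) : Prop :=
  (forall (a : C) u u' v n, Y (a *: u + u') v n = a *: Y u v n + Y u' v n) /\
  (forall (a : C) u v v' n, Y u (a *: v + v') n = a *: Y u v n + Y u v' n).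

(* Y(u,x)v \in V((x)) *)
Definition truncation (Y : V -> V -> int -> V) : Prop :=
  forall u v, exists N : int, forall n : int, N <= n -> Y u v n = 0.

Definition vacuum_axiom (one : V) (Y : V -> V -> int -> V) : Prop :=
  forall v n, Y one v n = if n == (-1)%R then v else 0.

(* Y(v,x)1 \in V[[x]] with constant term v *)
Definition creation_axiom (one : V) (Y : V -> V -> int -> V) : Prop :=
  forall v, (forall n : int, 0 <= n -> Y v one n = 0) /\ Y v one (-1) = v.

(* Weak associativity, coefficientwise.  For u,v,w there is l >= 0 with
     (x0+x2)^l Y(u,x0+x2)Y(v,x2)w = (x0+x2)^l Y(Y(u,x0)v,x2)w ,
   (binomial expansions in nonnegative powers of x2).  The coefficient of
   x0^a x2^b of the left side is
     \sum_{k>=0} binom(a+k,k) u_{l-1-k-a} v_{k-b-1} w   (a finite sum, since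
   v_m w = 0 for m large), and that of the right side is
     \sum_{j=0}^{l} binom(l,j) (u_{l-j-a-1} v)_{j-b-1} w . *)
Definition weak_assoc (Y : V -> V -> int -> V) : Prop :=
  forall u v w, exists l : nat, forall a b : int, exists K : nat,
    (forall k : nat, (K <= k)%N -> Y v w (k%:Z - b - 1) = 0) /\
    \sum_(k < K) gbinom (a + (k : nat)%:Z) k *:
        Y u (Y v w ((k : nat)%:Z - b - 1)) (l%:Z - 1 - (k : nat)%:Z - a)
    = \sum_(j < l.+1) ('C(l, j))%:R *:
        Y (Y u v (l%:Z - (j : nat)%:Z - a - 1)) w ((j : nat)%:Z - b - 1).

Definition is_nlva (one : V) (Y : V -> V -> int -> V) : Prop :=
  [/\ bilinear_modes Y, truncation Y, vacuum_axiom one Y,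
      creation_axiom one Y & weak_assoc Y].

Definition is_subspace (W : V -> Prop) : Prop :=
  W 0 /\ forall (a : C) x y, W x -> W y -> W (a *: x + y).

Definition is_submodule (Y : V -> V -> int -> V) (W : V -> Prop) : Prop :=
  is_subspace W /\ forall u w n, W w -> W (Y u w n).

Definition irreducible (Y : V -> V -> int -> V) : Prop :=
  forall W : V -> Prop, is_submodule Y W ->
    (forall v, W v -> v = 0) \/ (forall v, W v).

Definition countable_dim : Prop :=
  exists f : nat -> V, forall v : V,
    exists (n : nat) (c : 'I_n -> C), v = \sum_(i < n) c i *: f i.

Definition is_linear_map (W : lmodType C) (h : V -> W) : Prop :=
  forall (a : C) x y, h (a *: x + y) = a *: h x + h y.

Definition is_automorphism (one : V) (Y : V -> V -> int -> V) (s : V -> V)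
  : Prop :=
  [/\ is_linear_map s, bijective s, s one = one &
      forall u v n, s (Y u v n) = Y (s u) (s v) n].

End NLVA.

Section Group.
Variable C : fieldType.
Variable G : groupType.

Definition acts_by_automorphisms (U : lmodType C) (one : U)
  (Y : U -> U -> int -> U) (act : G -> U -> U) : Prop :=
  [/\ forall g, is_automorphism one Y (act g),
      forall u, act 1%g u = u &
      forall g h u, act (g * h)%g u = act g (act h u)].

Definition is_G_graded (V : lmodType C) (one : V) (Y : V -> V -> int -> V)
  (Vg : G -> V -> Prop) : Prop :=
  [/\ forall g, is_subspace (Vg g),
      (forall v : V, exists (s : seq G) (vs : G -> V),
          [/\ uniq s, forall g, g \in s -> Vg g (vs g) &
              v = \sum_(g <- s) vs g]),
      (forall (s : seq G) (vs : G -> V), uniq s ->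
          (forall g, g \in s -> Vg g (vs g)) ->
          \sum_(g <- s) vs g = 0 -> forall g, g \in s -> vs g = 0),
      Vg 1%g one &
      forall g h u v n, Vg g u -> Vg h v -> Vg (g * h)%g (Y u v n)].

End Group.

Section Tensor.
Variable C : fieldType.
Variables U V T : lmodType C.

Definition bilinear_fun (W : lmodType C) (f : U -> V -> W) : Prop :=
  (forall (a : C) u u' v, f (a *: u + u') v = a *: f u v + f u' v) /\
  (forall (a : C) u v v', f u (a *: v + v') = a *: f u v + f u v').

Definition is_tensor_product (tens : U -> V -> T) : Prop :=
  bilinear_fun tens /\
  forall (W : lmodType C) (f : U -> V -> W), bilinear_fun f ->
    exists h : T -> W,
      [/\ is_linear_map h, (forall u v, h (tens u v) = f u v) &
          forall h' : T -> W, is_linear_map h' ->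
            (forall u v, h' (tens u v) = f u v) -> forall t, h' t = h t].

End Tensor.

Section Smash.
Variable C : fieldType.
Variable G : groupType.
Variables U V T : lmodType C.

(* Ys is the vertex operator of the smash product U #_G V realized on the
   tensor product (T, tens):  Ys is bilinear and, for v in V[g],
     Y#(u(x)v, x)(u'(x)v') = Y(u,x) g(u') (x) Y(v,x) v',
   i.e.  (u(x)v)_n (u'(x)v') = \sum_{p} u_p g(u') (x) v_{n-1-p} v'
   (a finite sum; the range [lo, lo+M) below contains all nonzero terms). *)
Definition is_smash_modes (YU : U -> U -> int -> U) (YV : V -> V -> int -> V)
  (act : G -> U -> U) (Vg : G -> V -> Prop) (tens : U -> V -> T)
  (Ys : T -> T -> int -> T) : Prop :=
  bilinear_modes Ys /\
  forall g u v u' v' n, Vg g v ->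
    exists (lo : int) (M : nat),
      (forall p : int, (p < lo \/ lo + M%:Z <= p) ->
          YU u (act g u') p = 0 \/ YV v v' (n - 1 - p) = 0) /\
      Ys (tens u v) (tens u' v') n =
      \sum_(i < M) tens (YU u (act g u') (lo + (i : nat)%:Z))
                        (YV v v' (n - 1 - (lo + (i : nat)%:Z))).

End Smash.

From HB Require Import structures.
From mathcomp Require Import all_boot all_order all_algebra.
From mathcomp Require Import monoid.
From mathcomp Require Import reals complex.
From mathcomp Require Import finmap.
From mathcomp Require Import boolp classical_sets cardinality constructive_ereal.
From mathcomp Require Import measure lebesgue_measure.
From mathcomp Require Import zify.
Import Order.TTheory GRing.Theory Num.Theory.
Local Open Scope ring_scope.

(* Since U has countable dimension over the uncountable algebraically closed
   field C, Dixmier's form of Schur's lemma holds for U: an endomorphism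
   commuting with all modes is a scalar, for otherwise the vectors
   (phi - c)^-1 u0, c in C, would be linearly independent.  With Jacobson's
   density argument this shows that the algebra generated by the modes of U
   can kill u_2, ..., u_k without killing u_1 unless u_1 is a combination of
   them.  As (u (x) 1)_n acts on U (x) V as u_n (x) id, a shortest
   representation sum_i u_i (x) v_i of a nonzero element of a submodule W then
   yields a nonzero pure tensor u (x) v in W.  Irreducibility of U gives
   U (x) v in W, and since (1 (x) v')_n acts as g (x) v'_n for v' in V[g],
   irreducibility of V gives U (x) V in W. *)

Lemma realType_uncountable (R : realType) : ~ countable [set: R].
Proof.
move=> /countable_lebesgue_measure0 R0.
have I01 := lebesgue_measure_itv `[(0 : R), (1 : R)].
rewrite /= lte_fin ltr01 /= sube0 in I01.
set I := (X in lebesgue_measure X) in I01.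
have : (lebesgue_measure I <= lebesgue_measure [set: R])%E.
  by apply: le_measure; rewrite ?inE //; exact: measurable_itv.
by rewrite R0 I01 lee_fin ler10.
Qed.

Lemma complex_uncountable (R : realType) : ~ countable [set: R[i]].
Proof.
move=> /countable_injP[f injf]; apply: (realType_uncountable R).
apply/countable_injP; exists (f \o real_complex R) => x y _ _ /injf.
by rewrite !in_setT => /(_ isT isT) [].
Qed.

Lemma uncountable_infinite_fiber (T : Type) (Q : T -> nat -> Prop) :
  ~ countable [set: T] -> (forall t, exists n, Q t n) ->
  exists n, infinite_set [set t | Q t n].
Proof.
move=> Tunc Qtot; apply: contrapT => fin; apply: Tunc.
have -> : [set: T]%classic = (\bigcup_(n in [set: nat]) [set t | Q t n])%classic.
  by apply/seteqP; split=> t // _; have [n ?] := Qtot t; exists n.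
apply: bigcup_countable => // n _; apply: finite_set_countable.
by apply: contrapT => inf; apply: fin; exists n.
Qed.

Lemma infinite_set_injective {T : choiceType} {A : set T} n :
  infinite_set A -> exists2 c : 'I_n.+1 -> T, injective c & forall i, A (c i).
Proof.
move=> /(infinite_set_fset n.+1) [B BA szB].
have : B != fset0 by rewrite -cardfs_gt0 (leq_trans _ szB).
case/fset0Pn => x0 _.
have ltB (i : 'I_n.+1) : (i < size B)%N by rewrite (leq_trans (ltn_ord i)).
exists (fun i => nth x0 B i) => [i j /eqP|i]; last by apply: BA; exact: mem_nth.
by rewrite nth_uniq ?fset_uniq // => /eqP/val_inj.
Qed.

Lemma dependent_in_span (F : fieldType) (U : lmodType F) (f : nat -> U) n
    (x : 'I_n.+1 -> U) (M : 'I_n.+1 -> 'I_n -> F) :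
  (forall j, x j = \sum_(i < n) M j i *: f i) ->
  exists2 a : 'I_n.+1 -> F, exists j, a j != 0 & \sum_j a j *: x j = 0.
Proof.
move=> x_span; pose A := \matrix_(j, i) M j i.
have /matrix0Pn[i [j0 a_j0]] : kermx A != 0.
  by rewrite kermx_eq0 /row_free neq_ltn ltnS rank_leq_col.
have aA0 : row i (kermx A) *m A = 0 by apply/sub_kermxP; exact: row_sub.
exists (kermx A i) => //; first by exists j0.
under eq_bigr => j _ do rewrite x_span scaler_sumr.
rewrite exchange_big big1 //= => l _.
under eq_bigr => j _ do rewrite scalerA.
have := congr1 (fun B : 'M_(1, n) => B 0 l) aA0; rewrite !mxE => aAl.
rewrite -scaler_suml (_ : \sum_j _ = 0) ?scale0r // -[RHS]aAl.
by apply: eq_bigr => j _; rewrite !mxE.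
Qed.

Section LinearMap.
Context {F : fieldType} {U W : lmodType F} {h : U -> W}.
Hypothesis h_linear : is_linear_map h.

Let hL : {linear U -> W} :=
  HB.pack h (GRing.isLinear.Build F U W *:%R h (fun a x y => h_linear a x y)).

Lemma linear_map0 : h 0 = 0. Proof. exact: (linear0 hL). Qed.
Lemma linear_mapZ a x : h (a *: x) = a *: h x. Proof. exact: (linearZZ hL). Qed.
Lemma linear_mapB x y : h (x - y) = h x - h y. Proof. exact: (linearB hL). Qed.
Lemma linear_map_sum (I : Type) (r : seq I) (P : pred I) (f : I -> U) :
  h (\sum_(i <- r | P i) f i) = \sum_(i <- r | P i) h (f i).
Proof. exact: (linear_sum hL). Qed.

End LinearMap.

Lemma linear_map_shift {F : fieldType} {U : lmodType F} {phi : U -> U} c :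
  is_linear_map phi -> is_linear_map (fun z => phi z - c *: z).
Proof.
move=> phi_lin a x y; rewrite phi_lin scalerDr scalerBr !scalerA mulrC -scalerA.
by rewrite opprD addrACA.
Qed.

Section PolyAction.
Context {F : fieldType} {U : lmodType F} (phi : U -> U).
Hypothesis phi_linear : is_linear_map phi.

Definition poly_act (p : {poly F}) (z : U) :=
  \sum_(i < size p) p`_i *: iter i phi z.

Lemma poly_act_widen {n} {p : {poly F}} z : (size p <= n)%N ->
  poly_act p z = \sum_(i < n) p`_i *: iter i phi z.
Proof.
move=> le_p_n; rewrite /poly_act (big_ord_widen _ (fun i => p`_i *: iter i phi z) le_p_n).
rewrite big_mkcond; apply: eq_bigr => i _; case: ltnP => // le_p_i.
by rewrite nth_default ?scale0r.
Qed.

Lemma poly_act0 z : poly_act 0 z = 0.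
Proof. by rewrite /poly_act size_poly0 big_ord0. Qed.

Lemma poly_actD p q z : poly_act (p + q) z = poly_act p z + poly_act q z.
Proof.
rewrite (poly_act_widen z (size_polyD p q)).
rewrite (poly_act_widen z (leq_maxl (size p) (size q))).
rewrite (poly_act_widen z (leq_maxr (size p) (size q))).
by rewrite -big_split; apply: eq_bigr => i _; rewrite coefD scalerDl.
Qed.

Lemma poly_actZ a p z : poly_act (a *: p) z = a *: poly_act p z.
Proof.
rewrite (poly_act_widen z (size_scale_leq a p)) /poly_act scaler_sumr.
by apply: eq_bigr => i _; rewrite coefZ scalerA.
Qed.

Lemma poly_act_sum (I : Type) (r : seq I) (P : pred I) (f : I -> {poly F}) z :
  poly_act (\sum_(i <- r | P i) f i) z = \sum_(i <- r | P i) poly_act (f i) z.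
Proof. by elim/big_rec2: _ => [|i q1 q2 _ <-]; rewrite ?poly_act0 ?poly_actD. Qed.

Lemma poly_actC c z : poly_act c%:P z = c *: z.
Proof. by rewrite (poly_act_widen z (size_polyC_leq1 c)) big_ord1 coefC. Qed.

Lemma poly_actMX p z : poly_act (p * 'X) z = poly_act p (phi z).
Proof.
have le_pX : (size (p * 'X)%R <= (size p).+1)%N.
  by rewrite (leq_trans (size_polyMleq _ _)) // size_polyX addn2.
rewrite (poly_act_widen z le_pX) big_ord_recl coefMX scale0r add0r.
by apply: eq_bigr => i _; rewrite coefMX /= -iterSr.
Qed.

Lemma iter_linear n : is_linear_map (iter n phi).
Proof. by elim: n => [|n IH] a x y //=; rewrite IH phi_linear. Qed.

Lemma poly_act_linear p : is_linear_map (poly_act p).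
Proof.
move=> a x y; rewrite /poly_act scaler_sumr -big_split /=.
by apply: eq_bigr => i _; rewrite iter_linear scalerDr !scalerA mulrC.
Qed.

Lemma poly_actMXsubC p c z :
  poly_act (p * ('X - c%:P)) z = poly_act p (phi z - c *: z).
Proof.
rewrite mulrBr [p * c%:P]mulrC mul_polyC poly_actD poly_actMX -scaleNr poly_actZ.
by rewrite (linear_mapB (poly_act_linear p)) (linear_mapZ (poly_act_linear p)) scaleNr.
Qed.

End PolyAction.

Section Resolvents.
Context {F : closedFieldType} {U : lmodType F} {phi : U -> U}.
Hypothesis phi_linear : is_linear_map phi.
Hypothesis shift_injective : forall c z, phi z - c *: z = 0 -> z = 0.

Lemma poly_act_injective {p z} : p != 0 -> poly_act phi p z = 0 -> z = 0.
Proof.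
have [n] := ubnP (size p); elim: n p z => // n IH p z /ltnSE le_p_n p_neq0.
have [p_const|p_nonconst] := leqP (size p) 1.
  move: p_neq0; rewrite (size1_polyC p_const) polyC_eq0 poly_actC => c_neq0.
  by move/eqP; rewrite scaler_eq0 (negPf c_neq0) => /eqP.
have [r /factor_theorem [q def_p]] : exists r, root p r.
  by apply/closed_rootP; rewrite neq_ltn p_nonconst orbT.
have q_neq0 : q != 0 by apply: contra_neq p_neq0; rewrite def_p => ->; rewrite mul0r.
have size_q : size p = (size q).+1.
  by rewrite def_p size_Mmonic ?monicXsubC // size_XsubC addn2.
rewrite def_p poly_actMXsubC // => /IH; rewrite -ltnS -size_q => /(_ le_p_n q_neq0).
exact: shift_injective.
Qed.

Context {u0 : U} {X : F -> U}.
Hypothesis u0_neq0 : u0 <> 0.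
Hypothesis X_resolvent : forall c, phi (X c) - c *: X c = u0.

(* Applying prod_j (phi - c_j) to a relation sum_i a_i X(c_i) = 0 gives
   p(phi) u0 = 0 for p = sum_i a_i prod_(j != i) (X - c_j); hence p = 0, and
   p(c_i) = a_i prod_(j != i) (c_i - c_j). *)
Lemma resolvent_free {k} {cs : 'I_k -> F} {a : 'I_k -> F} : injective cs ->
  \sum_i a i *: X (cs i) = 0 -> forall i, a i = 0.
Proof.
move=> cs_inj rel_a.
pose Q i := \prod_(j < k | j != i) ('X - (cs j)%:P).
pose Qall := \prod_(j < k) ('X - (cs j)%:P).
have Qall_split i : Qall = Q i * ('X - (cs i)%:P) by rewrite /Qall (bigD1 i) //= mulrC.
pose p := \sum_i a i *: Q i.
have p_u0 : poly_act phi p u0 = 0.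
  have Qlin := poly_act_linear phi phi_linear Qall.
  rewrite -(linear_map0 Qlin) -{}rel_a (linear_map_sum Qlin) poly_act_sum.
  apply: eq_bigr => i _; rewrite poly_actZ (linear_mapZ Qlin) -(X_resolvent (cs i)).
  by rewrite (Qall_split i) poly_actMXsubC.
have p0 : p = 0.
  by apply: contraTeq isT => p_neq0; case: u0_neq0; exact: (poly_act_injective p_neq0 p_u0).
move=> i; have /eqP := congr1 (fun q => q.[cs i]) p0.
rewrite horner0 horner_sum (bigD1 i) //= big1 ?addr0 => [|j j_neq_i]; last first.
  by rewrite hornerZ horner_prod (bigD1 i) 1?eq_sym //= hornerXsubC subrr mul0r mulr0.
rewrite hornerZ horner_prod mulf_eq0 prodf_seq_eq0 => /orP[/eqP //|].
case/hasP => j _ /andP[j_neq_i]; rewrite hornerXsubC subr_eq0 => /eqP/cs_inj ji.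
by rewrite ji eqxx in j_neq_i.
Qed.

End Resolvents.

Section Subspaces.
Context {F : fieldType} {T : lmodType F} {P : T -> Prop}.
Hypothesis P_subspace : is_subspace P.

Lemma subspaceD x y : P x -> P y -> P (x + y).
Proof. by case: P_subspace => _ PD Px Py; have := PD 1 x y Px Py; rewrite scale1r. Qed.

Lemma subspace_sum (I : eqType) (r : seq I) (f : I -> T) :
  (forall i, i \in r -> P (f i)) -> P (\sum_(i <- r) f i).
Proof.
move=> Pf; rewrite big_seq; case: P_subspace => P0 _.
by elim/big_rec: _ => // i y i_r Py; apply: subspaceD => //; exact: Pf.
Qed.

Definition subspace_pred : {pred T} := fun t => `[< P t >].

Lemma subspace_pred_closed : subsemimod_closed subspace_pred.
Proof.
case: P_subspace => P0 PD; split; first split.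
- exact/asboolP.
- by move=> x y /asboolP Px /asboolP Py; apply/asboolP/subspaceD.
- by move=> a x /asboolP Px; apply/asboolP; have := PD a x 0 Px P0; rewrite addr0.
Qed.

Definition subspace_type := {t : T | subspace_pred t}.
HB.instance Definition _ := Choice.on subspace_type.
HB.instance Definition _ := [isSub of subspace_type for @sval T subspace_pred].
HB.instance Definition _ := GRing.SubChoice_isSubLmodule.Build
  F T subspace_pred subspace_type subspace_pred_closed.

Let valD (x y : subspace_type) : val (x + y) = val x + val y.
Proof. exact: raddfD. Qed.
Let valZ a (x : subspace_type) : val (a *: x) = a *: val x.
Proof. exact: linearZ. Qed.

(* Factor the inclusion of the pure tensors through the subspace; uniqueness
   in the universal property then forces the subspace to be everything. *)
Lemma tensor_subspace_full {U V : lmodType F} {tens : U -> V -> T} :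
  is_tensor_product tens -> (forall u v, P (tens u v)) -> forall t, P t.
Proof.
move=> [tens_bil tens_univ] P_tens t.
pose f u v : subspace_type := exist _ (tens u v) (asboolT (P_tens u v)).
have f_bil : bilinear_fun f.
  by case: tens_bil => tensL tensR; split=> a x y z; apply: val_inj;
    rewrite valD valZ /= ?tensL ?tensR.
have [h [h_lin h_f _]] := tens_univ _ f f_bil.
have [h0 [_ _ h0_unique]] := tens_univ _ tens tens_bil.
have val_h : val (h t) = t.
  transitivity (h0 t); last by rewrite -(h0_unique id).
  apply: (h0_unique (val \o h)) => [a x y|u v] /=; first by rewrite h_lin valD valZ.
  by rewrite h_f.
by have /asboolP := valP (h t); rewrite val_h.
Qed.

End Subspaces.

Lemma submodule_preimage {F : fieldType} {U T : lmodType F}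
    {YU : U -> U -> int -> U} {YT : T -> T -> int -> T} {h : U -> T} {W : T -> Prop} :
  is_linear_map h -> (forall u n, exists s, forall x, h (YU u x n) = YT s (h x) n) ->
  is_submodule YT W -> is_submodule YU (fun x => W (h x)).
Proof.
move=> h_lin h_modes [[W0 WD] WY]; split; first split.
- by rewrite (linear_map0 h_lin).
- by move=> a x y Wx Wy; rewrite h_lin; exact: WD.
- by move=> u x n Wx; have [s ->] := h_modes u n; exact: WY.
Qed.

Definition intertwines {F : fieldType} {U : lmodType F} (Y : U -> U -> int -> U)
  (psi : U -> U) := forall u w n, psi (Y u w n) = Y u (psi w) n.

Inductive mode_algebra {F : fieldType} {U : lmodType F} (Y : U -> U -> int -> U) :
    (U -> U) -> Prop :=
  | mode_algebra_id : mode_algebra Y (fun x => x)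
  | mode_algebra_zero : mode_algebra Y (fun=> 0)
  | mode_algebra_mode u n a :
      mode_algebra Y a -> mode_algebra Y (fun x => Y u (a x) n)
  | mode_algebra_lin c a b : mode_algebra Y a -> mode_algebra Y b ->
      mode_algebra Y (fun x => c *: a x + b x).

Definition annihilates {F : fieldType} {U : lmodType F} (a : U -> U) (ys : seq U) :=
  forall y, y \in ys -> a y = 0.

Fixpoint in_span {F : fieldType} {U : lmodType F} (ys : seq U) (x : U) : Prop :=
  if ys is y :: ys' then exists c, in_span ys' (x - c *: y) else x = 0.

Section Modes.
Context {F : fieldType} {U : lmodType F} {Y : U -> U -> int -> U}.
Hypothesis Y_bilinear : bilinear_modes Y.

Lemma modes_linear u n : is_linear_map (fun v => Y u v n).
Proof. by move=> a x y; case: Y_bilinear => _ ->. Qed.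

Lemma zero_submodule : is_submodule Y (fun x => x = 0).
Proof.
split; first by split=> // a x y -> ->; rewrite scaler0 addr0.
by move=> u w n ->; exact: (linear_map0 (modes_linear u n)).
Qed.

Lemma mode_algebra_linear {a} : mode_algebra Y a -> is_linear_map a.
Proof.
elim=> {a} [//|c x y|u n a _ a_lin c x y|c a b _ a_lin _ b_lin d x y].
- by rewrite scaler0 addr0.
- by rewrite a_lin modes_linear.
- by rewrite a_lin b_lin scalerDr !scalerA mulrC -scalerA scalerDr addrACA.
Qed.

Lemma annihilator_orbit_submodule ys y :
  is_submodule Y (fun z => exists a, [/\ mode_algebra Y a, annihilates a ys & a y = z]).
Proof.
split; first split.
- by exists (fun=> 0); split=> //; exact: mode_algebra_zero.
- move=> c _ _ [a [Aa a_ys <-]] [b [Ab b_ys <-]].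
  exists (fun x => c *: a x + b x); split=> //; first exact: mode_algebra_lin.
  by move=> x x_ys; rewrite a_ys // b_ys // scaler0 addr0.
- move=> u _ n [a [Aa a_ys <-]]; exists (fun x => Y u (a x) n); split=> //.
  + exact: mode_algebra_mode.
  + by move=> x x_ys; rewrite a_ys // (linear_map0 (modes_linear u n)).
Qed.

Hypothesis Y_irreducible : irreducible Y.

Lemma intertwiner_zero_or_bijective {psi} : is_linear_map psi -> intertwines Y psi ->
  (forall z, psi z = 0) \/
  (forall z, psi z = 0 -> z = 0) /\ (forall y, exists z, psi z = y).
Proof.
move=> psi_lin psi_Y.
have psi_modes u n : exists s, forall x, psi (Y u x n) = Y s (psi x) n.
  by exists u => x; exact: psi_Y.
have [psi_inj|psi0] :=
  Y_irreducible _ (submodule_preimage psi_lin psi_modes zero_submodule); last by left.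
have im_sub : is_submodule Y (fun y => exists z, psi z = y).
  split; first split.
  - by exists 0; exact: (linear_map0 psi_lin).
  - by move=> a _ _ [x <-] [y <-]; exists (a *: x + y); rewrite psi_lin.
  - by move=> u _ n [z <-]; exists (Y u z n); rewrite psi_Y.
have [im0|im_full] := Y_irreducible _ im_sub; last by right.
by left=> z; apply: im0; exists z.
Qed.

End Modes.

Section Dixmier.
Context {F : closedFieldType} {U : lmodType F} {Y : U -> U -> int -> U}.
Hypothesis F_uncountable : ~ countable [set: F].
Hypotheses (Y_bilinear : bilinear_modes Y) (Y_irreducible : irreducible Y).
Hypothesis U_countable : countable_dim U.

(* Otherwise every phi - c is invertible, and the uncountably many vectors
   (phi - c)^-1 u0 would be linearly independent in a space of countable
   dimension. *)
Lemma dixmier_scalar {phi} : is_linear_map phi -> intertwines Y phi ->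
  exists c, forall z, phi z = c *: z.
Proof.
move=> phi_lin phi_Y; apply: contrapT => not_scalar.
have [u0 u0_neq0] : exists u0 : U, u0 <> 0.
  apply: contrapT => U0; apply: not_scalar; exists 0 => z.
  have -> : z = 0 by apply: contrapT => z_neq0; apply: U0; exists z.
  by rewrite scaler0 (linear_map0 phi_lin).
have shift_bij c : (forall z, phi z - c *: z = 0 -> z = 0) /\
                   (forall y, exists z, phi z - c *: z = y).
  have shift_Y : intertwines Y (fun z => phi z - c *: z).
    move=> u w n; have Yun_lin := modes_linear Y_bilinear u n.
    by rewrite /= phi_Y (linear_mapB Yun_lin) (linear_mapZ Yun_lin).
  have [shift0|//] := intertwiner_zero_or_bijective Y_bilinear Y_irreducible
    (linear_map_shift c phi_lin) shift_Y.
  by case: not_scalar; exists c => z; apply/eqP; rewrite -subr_eq0 shift0.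
have [X X_res] := choice (fun c => (shift_bij c).2 u0).
have [f f_span] := U_countable.
have [n /(infinite_set_injective n) [cs cs_inj /choice [M M_span]]] :=
  @uncountable_infinite_fiber F
    (fun c n => exists coef : 'I_n -> F, X c = \sum_(i < n) coef i *: f i)
    F_uncountable (fun c => f_span (X c)).
have [a [j a_j] rel_a] := @dependent_in_span _ _ f n (fun j => X (cs j)) M M_span.
move/eqP: a_j; apply.
exact: (resolvent_free phi_lin (fun c => (shift_bij c).1) u0_neq0 X_res cs_inj rel_a).
Qed.

Lemma density_step {ys y x} :
  (forall a, mode_algebra Y a -> annihilates a (y :: ys) -> a x = 0) ->
  (forall z, exists a, [/\ mode_algebra Y a, annihilates a ys & a y = z]) ->
  exists c, forall a, mode_algebra Y a -> annihilates a ys -> a x = c *: a y.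
Proof.
move=> x_ann /choice[A /all_and3[A_alg A_ys A_y]]; pose phi z := A z x.
(* phi (a y) = a x is well defined: a - A (a y) kills y :: ys, hence x. *)
have phi_a a : mode_algebra Y a -> annihilates a ys -> a x = phi (a y).
  move=> Aa a_ys; apply/eqP; rewrite -subr_eq0 -scaleN1r addrC; apply/eqP.
  apply: (x_ann (fun t => (-1) *: A (a y) t + a t)); first exact: mode_algebra_lin.
  move=> t; rewrite in_cons => /predU1P[->|t_ys]; first by rewrite A_y scaleN1r addNr.
  by rewrite A_ys // a_ys // scaler0 addr0.
have phi_lin : is_linear_map phi.
  move=> c z1 z2; rewrite -{1}(A_y z1) -{1}(A_y z2); symmetry.
  apply: (phi_a (fun t => c *: A z1 t + A z2 t)); first exact: mode_algebra_lin.
  by move=> t t_ys; rewrite !A_ys // scaler0 addr0.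
have phi_Y : intertwines Y phi.
  move=> u w n; rewrite -{1}(A_y w); symmetry.
  apply: (phi_a (fun t => Y u (A w t) n)); first exact: mode_algebra_mode.
  by move=> t t_ys; rewrite A_ys // (linear_map0 (modes_linear Y_bilinear u n)).
have [c phi_c] := dixmier_scalar phi_lin phi_Y.
by exists c => a Aa a_ys; rewrite (phi_a a) // phi_c.
Qed.

Lemma density ys x :
  (forall a, mode_algebra Y a -> annihilates a ys -> a x = 0) -> in_span ys x.
Proof.
elim: ys x => [|y ys IH] x x_ann /=.
  by apply: (x_ann _ (mode_algebra_id Y)) => y; rewrite in_nil.
have [y_ann|y_free] :=
  pselect (forall a, mode_algebra Y a -> annihilates a ys -> a y = 0).
  exists 0; rewrite scale0r subr0; apply: IH => a Aa a_ys; apply: x_ann => // t.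
  by rewrite in_cons => /predU1P[->|]; [exact: y_ann | exact: a_ys].
have [y_zero|y_gen] :=
  Y_irreducible _ (annihilator_orbit_submodule Y_bilinear ys y).
  by case: y_free => a Aa a_ys; apply: y_zero; exists a.
have [c x_c] := density_step x_ann y_gen.
exists c; apply: IH => a Aa a_ys; have a_lin := mode_algebra_linear Y_bilinear Aa.
by rewrite (linear_mapB a_lin) (linear_mapZ a_lin) x_c // subrr.
Qed.

End Dixmier.

Lemma sum_window_single {F : fieldType} {W : lmodType F} (lo : int) (M : nat)
    (f : int -> W) (p0 : int) :
  (forall p, p != p0 -> f p = 0) -> ((p0 < lo \/ lo + M%:Z <= p0) -> f p0 = 0) ->
  \sum_(i < M) f (lo + (i : nat)%:Z) = f p0.
Proof.
move=> f_single f_out.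
have [/andP[lo_p0 p0_hi]|p0_out] := boolP ((lo <= p0) && (p0 < lo + M%:Z)).
  have k_lt : (`|p0 - lo|%N < M)%N by lia.
  rewrite (bigD1 (Ordinal k_lt)) //= big1 ?addr0 => [|i i_neq]; first by congr f; lia.
  by apply: f_single; apply: contra_neq i_neq => E; apply: val_inj => /=; lia.
rewrite f_out; last by lia.
rewrite big1 // => i _; have [i_p0|] := eqVneq (lo + (i : nat)%:Z) p0; last exact: f_single.
by rewrite i_p0 f_out //; lia.
Qed.

Section SmashProduct.
Context {F : closedFieldType} {G : groupType} {U V T : lmodType F}.
Context {oneU : U} {YU : U -> U -> int -> U} {act : G -> U -> U}.
Context {oneV : V} {YV : V -> V -> int -> V} {Vg : G -> V -> Prop}.
Context {tens : U -> V -> T} {Ys : T -> T -> int -> T}.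
Hypothesis F_uncountable : ~ countable [set: F].
Hypotheses (YU_bilinear : bilinear_modes YU) (YU_vacuum : vacuum_axiom oneU YU).
Hypotheses (YV_bilinear : bilinear_modes YV) (YV_vacuum : vacuum_axiom oneV YV).
Hypotheses (YU_irreducible : irreducible YU) (YV_irreducible : irreducible YV).
Hypothesis U_countable : countable_dim U.
Hypothesis act1 : forall u, act 1%g u = u.
Hypothesis actM : forall g h u, act (g * h)%g u = act g (act h u).
Hypothesis Vg_oneV : Vg 1%g oneV.
Hypothesis V_graded_span : forall v, exists (s : seq G) (vs : G -> V),
  (forall g, g \in s -> Vg g (vs g)) /\ v = \sum_(g <- s) vs g.
Hypothesis tens_universal : is_tensor_product tens.
Hypothesis Ys_smash : is_smash_modes YU YV act Vg tens Ys.

Let tensL v : is_linear_map (tens^~ v).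
Proof. by move=> a x y; case: tens_universal => [[-> _] _]. Qed.
Let tensR u : is_linear_map (tens u).
Proof. by move=> a x y; case: tens_universal => [[_ ->] _]. Qed.
Let tens0l v : tens 0 v = 0. Proof. exact: linear_map0 (tensL v). Qed.
Let tens0r u : tens u 0 = 0. Proof. exact: linear_map0 (tensR u). Qed.
Let Ys_bilinear : bilinear_modes Ys. Proof. by case: Ys_smash. Qed.
Let YV_linear_left y n : is_linear_map (fun v => YV v y n).
Proof. by move=> a x z; case: YV_bilinear => -> _. Qed.
Let actK g u : act g (act g^-1%g u) = u.
Proof. by rewrite -actM mulgV act1. Qed.

Lemma smash_mode_unitV u u' v' n :
  Ys (tens u oneV) (tens u' v') n = tens (YU u u' n) v'.
Proof.
have [lo [M [outside ->]]] := Ys_smash.2 1%g u oneV u' v' n Vg_oneV.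
rewrite (@sum_window_single _ _ lo M
  (fun p => tens (YU u (act 1%g u') p) (YV oneV v' (n - 1 - p))) n).
- by rewrite act1 YV_vacuum (_ : n - 1 - n = -1) ?eqxx //; lia.
- move=> p p_neq; rewrite YV_vacuum; case: eqP => [?|_]; last exact: tens0r.
  by case/eqP: p_neq; lia.
- by case/outside => /= ->; rewrite ?tens0l ?tens0r.
Qed.

Lemma smash_mode_unitU {g v} u' v' n : Vg g v ->
  Ys (tens oneU v) (tens u' v') n = tens (act g u') (YV v v' n).
Proof.
move=> v_graded; have [lo [M [outside ->]]] := Ys_smash.2 g oneU v u' v' n v_graded.
rewrite (@sum_window_single _ _ lo M
  (fun p => tens (YU oneU (act g u') p) (YV v v' (n - 1 - p))) (-1)).
- by rewrite YU_vacuum eqxx (_ : n - 1 - -1 = n) //; lia.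
- by move=> p /negPf p_neq; rewrite YU_vacuum p_neq tens0l.
- by case/outside => /= ->; rewrite ?tens0l ?tens0r.
Qed.

Definition tensor_sum (s : seq (U * V)) := \sum_(p <- s) tens p.1 p.2.

Lemma tensor_sum_surj t : exists s, t = tensor_sum s.
Proof.
have sums_subspace : is_subspace (fun t => exists s, t = tensor_sum s).
  split; first by exists [::]; rewrite /tensor_sum big_nil.
  move=> a _ _ [s1 ->] [s2 ->]; exists ([seq (a *: p.1, p.2) | p <- s1] ++ s2).
  rewrite /tensor_sum big_cat big_map scaler_sumr; congr (_ + _).
  by apply: eq_bigr => p _; rewrite (linear_mapZ (tensL p.2)).
apply: (tensor_subspace_full sums_subspace tens_universal) => u v.
by exists [:: (u, v)]; rewrite /tensor_sum big_seq1.
Qed.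

Lemma submodule_mode_algebra {W a} s : is_submodule Ys W -> mode_algebra YU a ->
  W (tensor_sum s) -> W (tensor_sum [seq (a p.1, p.2) | p <- s]).
Proof.
move=> [[W0 WD] WY] Aa Ws; rewrite /tensor_sum big_map /=.
elim: Aa => {a} [|//|u n a _ IH|c a b _ IHa _ IHb]; first exact: Ws.
- by rewrite big1 // => p _; rewrite tens0l.
- rewrite (eq_bigr (fun p => Ys (tens u oneV) (tens (a p.1) p.2) n)) => [|p _].
    by rewrite -(linear_map_sum (modes_linear Ys_bilinear _ n)); exact: WY.
  by rewrite smash_mode_unitV.
- rewrite (eq_bigr (fun p => c *: tens (a p.1) p.2 + tens (b p.1) p.2)) => [|p _].
    by rewrite big_split -scaler_sumr; exact: WD.
  by rewrite tensL.
Qed.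

Lemma tensor_sum_absorb {s u} v : in_span [seq p.1 | p <- s] u ->
  exists2 s', size s' = size s & tensor_sum s' = tens u v + tensor_sum s.
Proof.
elim: s u => [|[y w] s IH] u /= u_span.
  by exists [::]; rewrite // /tensor_sum big_nil u_span tens0l addr0.
have [c /IH[s' size_s' sum_s']] := u_span.
exists ((y, c *: v + w) :: s'); first by rewrite /= size_s'.
rewrite /tensor_sum !big_cons -!/(tensor_sum _) sum_s' /= tensR.
rewrite (linear_mapB (tensL v)) (linear_mapZ (tensL v)).
by rewrite addrACA [c *: _ + _]addrC subrK.
Qed.

Lemma submodule_sliceU {W} v : is_submodule Ys W -> is_submodule YU (fun x => W (tens x v)).
Proof.
move=> W_sub; apply: (submodule_preimage (tensL v) _ W_sub) => u n.
by exists (tens u oneV) => x; rewrite smash_mode_unitV.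
Qed.

Lemma submodule_sliceV {W} :
  is_submodule Ys W -> is_submodule YV (fun y => forall x, W (tens x y)).
Proof.
move=> [[W0 WD] WY]; split; first split.
- by move=> x; rewrite tens0r.
- by move=> c y1 y2 W1 W2 x; rewrite tensR; exact: WD.
- move=> v y n Wy x; have [gs [vs [vs_graded ->]]] := V_graded_span v.
  rewrite (linear_map_sum (YV_linear_left y n)) (linear_map_sum (tensR x)).
  apply: (subspace_sum (conj W0 WD)) => g g_gs.
  rewrite -{1}(actK g x) -(smash_mode_unitU _ _ _ (vs_graded g g_gs)).
  exact: WY.
Qed.

(* Induction on the length of a tensor-sum representation: either the first
   left factor lies in the span of the others and the sum can be shortened,
   or by density an element of the mode algebra kills all the other left
   factors but not the first one, and isolates a single pure tensor. *)
Lemma submodule_pure_tensor {W s} : is_submodule Ys W ->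
  W (tensor_sum s) -> tensor_sum s <> 0 -> exists u v, W (tens u v) /\ tens u v <> 0.
Proof.
move=> W_sub; have [n] := ubnP (size s); elim: n s => // n IH [|[u1 v1] s] /=.
  by move=> _ _; rewrite /tensor_sum big_nil.
have sum_cons : tensor_sum ((u1, v1) :: s) = tens u1 v1 + tensor_sum s.
  by rewrite /tensor_sum big_cons.
rewrite sum_cons => size_s Ws s_neq0.
have [u1_span|u1_free] := pselect (in_span [seq p.1 | p <- s] u1).
  have [s' size_s' sum_s'] := tensor_sum_absorb v1 u1_span.
  by apply: (IH s'); rewrite ?size_s' ?sum_s'.
have [a [Aa a_s a_u1]] : exists a,
    [/\ mode_algebra YU a, annihilates a [seq p.1 | p <- s] & a u1 <> 0].
  apply: contrapT => no_a; apply: u1_free.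
  apply: (density F_uncountable YU_bilinear YU_irreducible U_countable) => a Aa a_s.
  by apply: contrapT => a_u1; apply: no_a; exists a.
have W_a : W (tens (a u1) v1).
  have := submodule_mode_algebra ((u1, v1) :: s) W_sub Aa.
  rewrite sum_cons => /(_ Ws); rewrite /tensor_sum big_map big_cons /=.
  rewrite big1_seq ?addr0 // => p /andP[_ p_s].
  by rewrite a_s ?tens0l //; exact: map_f.
have [a_v1_0|] := pselect (tens (a u1) v1 = 0); last by exists (a u1), v1.
have [/(_ _ a_v1_0)//|v1_null] :=
  YU_irreducible _ (submodule_sliceU v1 (zero_submodule Ys_bilinear)).
by apply: (IH s) => //; move: Ws s_neq0; rewrite v1_null add0r.
Qed.

Lemma smash_irreducible : irreducible Ys.
Proof.
move=> W W_sub; have [[w Ww w_neq0]|W0] := pselect (exists2 w, W w & w <> 0); last first.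
  by left=> t Wt; apply: contrapT => t_neq0; apply: W0; exists t.
right; have [s def_w] := tensor_sum_surj w; rewrite def_w in Ww w_neq0.
have [u0 [v0 [W_uv uv_neq0]]] := submodule_pure_tensor W_sub Ww w_neq0.
have W_Uv0 x : W (tens x v0).
  have [/(_ _ W_uv) u0_eq0|//] := YU_irreducible _ (submodule_sliceU v0 W_sub).
  by case: uv_neq0; rewrite u0_eq0 tens0l.
have [/(_ _ W_Uv0) v0_eq0|W_all] := YV_irreducible _ (submodule_sliceV W_sub).
  by case: uv_neq0; rewrite v0_eq0 tens0r.
by apply: (tensor_subspace_full W_sub.1 tens_universal) => u v; exact: W_all.
Qed.

End SmashProduct.

Theorem corollary2p17 (R : realType) (G : groupType)
  (U : lmodType R[i]) (oneU : U) (YU : U -> U -> int -> U)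
  (act : G -> U -> U)
  (V : lmodType R[i]) (oneV : V) (YV : V -> V -> int -> V)
  (Vg : G -> V -> Prop)
  (T : lmodType R[i]) (tens : U -> V -> T) (Ys : T -> T -> int -> T) :
  is_nlva oneU YU ->
  acts_by_automorphisms oneU YU act ->
  is_nlva oneV YV ->
  is_G_graded oneV YV Vg ->
  irreducible YU ->
  irreducible YV ->
  countable_dim U ->
  is_tensor_product tens ->
  is_smash_modes YU YV act Vg tens Ys ->
  irreducible Ys.
Proof.
move=> [YU_bil _ YU_vac _ _] [_ act1 actM] [YV_bil _ YV_vac _ _]
  [_ V_span _ Vg_oneV _] YU_irr YV_irr U_cdim tens_univ Ys_smash.
apply: (smash_irreducible (complex_uncountable R) YU_bil YU_vac YV_bil YV_vac
  YU_irr YV_irr U_cdim act1 actM Vg_oneV _ tens_univ Ys_smash).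
by move=> v; have [s [vs [_ vs_graded ->]]] := V_span v; exists s, vs.
Qed.
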